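(* Let $(X,\ast,u,d)$ be a finite GL-rack, let $\Delta=\alpha_1\cdots\alpha_n$ be the disjoint cycle decomposition of its diagonal map (fixed points counted as $1$-cycles), $A_i=\operatorname{supp}(\alpha_i)$, and let $B_1,\dots,B_m$ be the sets obtained by taking, for each cycle length $\ell$ occurring, the union of all $A_i$ with $|A_i|=\ell$. Then for each $1\le j\le m$, $B_j\ast X:=\{b\ast x: b\in B_j, x\in X\}=B_j$.
   Context: A rack is a set $X$ with a binary operation $\ast$ such that for every $y\in X$ the map $x\mapsto x\ast y$ is a bijection of $X$ and $(x\ast y)\ast z=(x\ast z)\ast(y\ast z)$ for all $x,y,z$. A GL-rack is a quadruple $(X,\ast,u,d)$ where $(X,\ast)$ is a rack and $u,d\colon X\to X$ are maps such that for all $x,y\in X$: $u(d(x\ast x))=d(u(x\ast x))=x$; $u(x\ast y)=u(x)\ast y$ and $d(x\ast y)=d(x)\ast y$; $x\ast u(y)=x\ast d(y)=x\ast y$. The diagonal map is $\Delta(x)=x\ast x$; for a finite GL-rack it is a bijection (rack automorphism) and $\Delta=(u\circ d)^{-1}$. *)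

From mathcomp Require Import all_boot.
Set Implicit Arguments. Unset Strict Implicit. Unset Printing Implicit Defensive.

Definition is_rack (T : Type) (op : T -> T -> T) : Prop :=
  (forall y : T, bijective (fun x => op x y)) /\
  (forall x y z : T, op (op x y) z = op (op x z) (op y z)).

Definition is_GLrack (T : Type) (op : T -> T -> T) (u d : T -> T) : Prop :=
  [/\ is_rack op,
      (forall x, u (d (op x x)) = x /\ d (u (op x x)) = x),
      (forall x y, u (op x y) = op (u x) y /\ d (op x y) = op (d x) y)
    & (forall x y, op x (u y) = op x y /\ op x (d y) = op x y)].

Definition diag (T : Type) (op : T -> T -> T) : T -> T := fun x => op x x.

(* B_l : union of the supports of the cycles of Delta of length l, i.e. the
   set of points whose Delta-orbit (the cycle containing it) has size l. *)
Definition cycle_block (T : finType) (op : T -> T -> T) (l : nat) : {set T} :=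
  [set x | order (diag op) x == l].

Definition rack_act_set (T : finType) (op : T -> T -> T) (B : {set T}) : {set T} :=
  [set op b x | b in B, x in [set: T]].

From mathcomp Require Import all_boot.

(* Self-distributivity says that every right translation R_y = _ * y
   commutes with the diagonal map: (x * x) * y = (x * y) * (x * y).  A
   bijection commuting with Delta maps Delta-orbits onto Delta-orbits of the
   same size, so R_y maps B_l into B_l, and B_l * X = B_l because also
   z = R_z^-1(z) * z. *)

Section CommutingMaps.

Variables (T : finType) (f g : T -> T).
Hypothesis g_inj : injective g.
Hypothesis fg_comm : {morph g : y / f y}.

Lemma iter_morph n : {morph g : y / iter n f y}.
Proof. by elim: n => [|n IHn] y //=; rewrite fg_comm IHn. Qed.

Lemma fconnect_morph x : fconnect f (g x) =i g @: fconnect f x.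
Proof.
move=> z; apply/idP/imsetP.
- move=> /iter_findex <-; rewrite -iter_morph.
  by exists (iter (findex f (g x) z) f x) => //; apply: fconnect_iter.
- by move=> [y /iter_findex <- ->]; rewrite iter_morph; apply: fconnect_iter.
Qed.

Lemma order_morph x : order f (g x) = order f x.
Proof. by rewrite /order (eq_card (fconnect_morph x)) card_imset. Qed.

End CommutingMaps.

Section RackCycleBlocks.

Variables (T : finType) (op : T -> T -> T).
Hypothesis op_rack : is_rack op.

Lemma diag_act x y : diag op (op x y) = op (diag op x) y.
Proof. by case: op_rack => _ op_sd; rewrite /diag -op_sd. Qed.

Lemma order_diag_act x y : order (diag op) (op x y) = order (diag op) x.
Proof.
case: op_rack => op_bij _.
apply: (@order_morph _ _ (op^~ y)); first exact: bij_inj (op_bij y).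
by move=> z; rewrite diag_act.
Qed.

Lemma rack_act_cycle_block l : rack_act_set op (cycle_block op l) = cycle_block op l.
Proof.
apply/setP=> z; apply/imset2P/idP.
- by move=> [b x]; rewrite !inE => /eqP <- _ ->; rewrite order_diag_act.
- case: op_rack => op_bij _; case: (op_bij z) => g _ gK.
  have zE : op (g z) z = z by apply: gK.
  by rewrite inE -zE order_diag_act => hz; exists (g z) z; rewrite ?inE.
Qed.

End RackCycleBlocks.

Theorem proposition3p7 (X : finType) (op : X -> X -> X) (u d : X -> X) :
  is_GLrack op u d ->
  forall l : nat, (exists x : X, order (diag op) x = l) ->
    rack_act_set op (cycle_block op l) = cycle_block op l.
Proof. by case=> op_rack _ _ _ l _; apply: rack_act_cycle_block. Qed.
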